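(* Let $g,\gamma \ge 0$ be integers and let ${\rm T}$ be a $(3,\gamma)$-hyperelliptic numerical semigroup of genus $g$, with $u_1 := u_1({\rm T})$. Then $\#{\rm T}_{3-(u_1)_3} \leq \gamma + \lceil \frac{\chi}{3}\rceil$, where $\chi := u_1 - g + 3\gamma - 1 - \lfloor \frac{(g)_3}{2}\rfloor$.
   Context: A numerical semigroup is a submonoid ${\rm S}\subseteq\mathbb{N}$ with finite complement; its genus is $\#(\mathbb{N}\setminus{\rm S})$. For an integer $u$, $(u)_3$ denotes its residue modulo 3 in $\{0,1,2\}$. Let $[2g]=\{1,\dots,2g\}$, ${\rm T}^*={\rm T}\cap[2g]$, and ${\rm T}_i=\{t\in{\rm T}^*:(t)_3=i\}$ for $i\in\{0,1,2\}$. A numerical semigroup is $(3,\gamma)$-hyperelliptic if its first $\gamma$ positive elements are multiples of 3 with the $\gamma$-th equal to $6\gamma$, and $3(2\gamma+1)$ belongs to it. $u_1({\rm T}) := \min\{t \in {\rm T} : (t)_3 \neq 0\}$. *)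

From mathcomp Require Import all_boot all_order all_algebra.
Set Implicit Arguments. Unset Strict Implicit. Unset Printing Implicit Defensive.

Definition numerical_semigroup (S : nat -> bool) : Prop :=
  [/\ S 0,
      (forall a b, S a -> S b -> S (a + b)) &
      exists N, forall n, N <= n -> S n].

(* genus = #(N \ S): the number of gaps, counted below any bound N past
   which every integer lies in S. *)
Definition genus (S : nat -> bool) (g : nat) : Prop :=
  exists N, (forall n, N <= n -> S n) /\ count (fun n => ~~ S n) (iota 0 N) = g.

(* (3,gamma)-hyperelliptic: the first gamma positive elements of S are
   multiples of 3, the gamma-th one equals 6*gamma, and 3(2 gamma + 1) \in S. *)
Definition hyperelliptic3 (S : nat -> bool) (gamma : nat) : Prop :=
  [/\ S (6 * gamma),
      count S (iota 1 (6 * gamma)) = gamma,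
      (forall t, 1 <= t <= 6 * gamma -> S t -> t %% 3 = 0) &
      S (3 * (2 * gamma + 1))].

Definition is_u1 (S : nat -> bool) (u : nat) : Prop :=
  [/\ S u, u %% 3 != 0 & forall t, S t -> t %% 3 != 0 -> u <= t].

Definition cardTi (S : nat -> bool) (g i : nat) : nat :=
  count (fun t => S t && (t %% 3 == i)) (iota 1 (2 * g)).

(* ceiling of x / 3 for an integer x (intdiv's %/ by 3 is floor division) *)
Import GRing.Theory.
Definition ceil3 (x : int) : int := (- ((- x)%R %/ 3)%Z)%R.

From mathcomp Require Import all_boot all_order all_algebra.
From mathcomp Require Import zify.
Import Num.Theory.

(* Below a gap x of an additively closed S, t |-> x - t maps the elements of S
   injectively to gaps, so x < 2 * #(gaps <= x); in particular all gaps of a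
   numerical semigroup of genus g lie in [2g].  The same pairing, applied to
   {k | 3k \in T}, shows that every multiple of 3 from 6 gamma on lies in T,
   so T has exactly gamma gaps divisible by 3.  A gap congruent to u1 is either
   below u1 or u1 plus a gap divisible by 3, so there are at most
   u1 / 3 + gamma of them.  Hence at least g - 2 gamma - u1 / 3 gaps lie in the
   class 3 - (u1)_3, all inside [2g], and they are missing from
   T_{3 - (u1)_3}; the bound then follows by arithmetic. *)

Set Implicit Arguments.
Unset Strict Implicit.
Unset Printing Implicit Defensive.

Lemma count_iota_widen (p : pred nat) m n :
  m <= n -> (forall k, m <= k < n -> ~~ p k) -> count p (iota 0 n) = count p (iota 0 m).
Proof.
move=> le_mn np; rewrite -(subnKC le_mn) iotaD count_cat.
suff /eqP -> : count p (iota (0 + m) (n - m)) == 0 by rewrite addn0.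
by rewrite -leqn0 leqNgt -has_count; apply/hasPn => k; rewrite mem_iota => hk; apply: np; lia.
Qed.

Lemma count_mod_iota d i n :
  i < d -> count (fun x => x %% d == i) (iota 0 n) = n %/ d + (i < n %% d).
Proof.
move=> lt_id; have d_gt0 : 0 < d by lia.
elim: n => [|n IHn]; first by rewrite div0n mod0n.
rewrite -addn1 iotaD count_cat IHn /= add0n addn0 addn1 divnS // modnS.
have := ltn_pmod n d_gt0; case: ifP => [dvd_d_n1|_] lt_nd; last by case: eqP; lia.
have /eqP s1_eq_d : (n %% d).+1 == d.
  rewrite eqn_leq lt_nd /=; apply: contraLR dvd_d_n1; rewrite -ltnNge => lt_s1_d.
  by rewrite /dvdn -addn1 -modnDml addn1 modn_small.
case: eqP; lia.
Qed.

Lemma count_mul_iota (p : pred nat) d n :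
  0 < d -> (forall t, 1 <= t <= d * n -> p t -> d %| t) ->
  count p (iota 1 (d * n)) = count (fun k => p (d * k)) (iota 1 n).
Proof.
move=> d_gt0; elim: n => [|n IHn] p_dvd; first by rewrite muln0.
rewrite mulnSr iotaD -[n.+1]addn1 iotaD !count_cat IHn; last by move=> t ht; apply: p_dvd; lia.
congr (_ + _); rewrite -[X in iota _ X](prednK d_gt0) -[d.-1.+1]addn1 iotaD count_cat.
rewrite /= !addn0 (_ : 1 + d * n + d.-1 = d * (1 + n)); last by lia.
suff /eqP -> : count p (iota (1 + d * n) d.-1) == 0 by [].
rewrite -leqn0 leqNgt -has_count; apply/hasPn => t; rewrite mem_iota => ht.
apply/negP => /p_dvd; rewrite -(subnKC (_ : d * n <= t)); last by lia.
rewrite dvdn_addr ?dvdn_mulr // gtnNdvd; lia.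
Qed.

Lemma count_split_and (p q : pred nat) s :
  count (fun x => p x && q x) s + count (fun x => ~~ p x && q x) s = count q s.
Proof. by elim: s => //= x s <-; case: (p x); case: (q x) => /=; lia. Qed.

Lemma count_split_mod3 (p : pred nat) r s : 0 < r < 3 ->
  count p s = count (fun x => p x && (x %% 3 == 0)) s
            + count (fun x => p x && (x %% 3 == r)) s
            + count (fun x => p x && (x %% 3 == 3 - r)) s.
Proof.
move=> hr; elim: s => //= x s ->; have := ltn_mod x 3.
by case: (p x); case: (x %% 3) => [|[|[|k]]] /=; lia.
Qed.

Lemma le_ceil3 (x y : int) : (3 * y <= x + 2)%R -> (y <= ceil3 x)%R.
Proof. rewrite /ceil3; lia. Qed.

Section AdditivelyClosed.

Variable S : pred nat.
Hypothesis S_add : forall a b, S a -> S b -> S (a + b).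

Lemma gap_lt_double_count_gaps x :
  ~~ S x -> x < 2 * count (predC S) (iota 0 x.+1).
Proof.
move=> Sx; set s := iota 0 x.+1.
have rev_s : map (subn x) s = rev s.
  apply: (@eq_from_nth _ 0); rewrite ?size_map ?size_rev // => i; rewrite size_iota => ltix.
  by rewrite (nth_map 0) ?nth_rev ?size_iota // !nth_iota //; lia.
have : count S s <= count (predC S) s.
  rewrite (@eq_in_count _ S (fun y => (y <= x) && S y)); last first.
    by move=> y; rewrite /s mem_iota ltnS => /andP[_ ->].
  rewrite -[count (predC S) s]count_rev -rev_s count_map.
  apply: sub_count => y /andP[le_yx Sy] /=; apply: contra Sx => Sxy.
  by rewrite -(subnK le_yx) S_add.
have := count_predC S s; rewrite size_iota; lia.
Qed.

Lemma mem_ge_of_consecutive m :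
  S m -> S m.+1 -> 2 * count (predC S) (iota 0 m.+1) <= m -> forall k, m <= k -> S k.
Proof.
move=> Sm Sm1 few_gaps; elim/ltn_ind => k IHk le_mk.
have [le_k_m1 | lt_m1_k] := leqP k m.+1.
  by have [->|->] : k = m \/ k = m.+1 by lia.
apply/negPn/negP => Sk; have := gap_lt_double_count_gaps Sk.
rewrite -addn1 iotaD count_cat /= Sk (@count_iota_widen _ m.+1) ?(ltnW lt_m1_k) //; first lia.
by move=> j hj; rewrite /= negbK; apply: IHk; lia.
Qed.

Lemma count_gaps_shift_le d u n : S u ->
  count (fun x => ~~ S x && (x %% d == u %% d)) (iota 0 (u + n)) <=
  count (fun x => x %% d == u %% d) (iota 0 u) +
  count (fun x => ~~ S x && (x %% d == 0)) (iota 0 n).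
Proof.
move=> Su; rewrite iotaD add0n count_cat; apply: leq_add.
  by apply: sub_count => x /andP[].
rewrite -[in iota u n](addn0 u) iotaDl count_map; apply: sub_count => x /andP[Sux equx] /=.
rewrite -(mod0n d) -(eqn_modDl u) addn0 equx andbT.
by apply: contra Sux; apply: S_add.
Qed.

End AdditivelyClosed.

Section Genus.

Variables (S : pred nat) (g : nat).
Hypotheses (S_sg : numerical_semigroup S) (S_genus : genus S g).

Lemma gap_lt_double_genus x : ~~ S x -> x < 2 * g.
Proof.
case: S_sg S_genus => _ S_add _ [N [S_ge_N gapsN]] Sx.
have lt_xN : x < N by rewrite ltnNge; apply: contra Sx => /S_ge_N.
apply: (leq_trans (gap_lt_double_count_gaps S_add Sx)); rewrite leq_mul2l -gapsN.
by rewrite -(subnKC lt_xN) iotaD count_cat leq_addr orbT.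
Qed.

Lemma count_iota_gaps (q : pred nat) B : (forall x, q x -> ~~ S x) -> 2 * g < B ->
  count q (iota 0 B) = count q (iota 1 (2 * g)).
Proof.
case: S_sg => S0 _ _ q_gap lt_2g_B; rewrite (@count_iota_widen _ (2 * g).+1) //=.
  by case: (boolP (q 0)) => [/q_gap|]; rewrite ?S0.
by move=> k /andP[lt_2g_k _]; apply: contraTN lt_2g_k => /q_gap/gap_lt_double_genus; lia.
Qed.

Lemma count_gaps_genus B : 2 * g < B -> count (predC S) (iota 0 B) = g.
Proof.
case: S_genus => N [S_ge_N gapsN] lt_2g_B.
rewrite count_iota_gaps // -(@count_iota_gaps _ (maxn N (2 * g).+1)) ?leq_maxr //.
by rewrite (@count_iota_widen _ N) ?leq_maxl // => k /andP[/S_ge_N /= ->].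
Qed.

End Genus.

Section Hyperelliptic.

Variables (T : pred nat) (gamma : nat).
Hypotheses (T_sg : numerical_semigroup T) (T_hyp : hyperelliptic3 T gamma).

Lemma count_gaps_mul3 : count (fun k => ~~ T (3 * k)) (iota 1 (2 * gamma)) = gamma.
Proof.
case: T_hyp => _ count_T mod3_T _.
have count_T3 : count (fun k => T (3 * k)) (iota 1 (2 * gamma)) = gamma.
  have e6 : 3 * (2 * gamma) = 6 * gamma by rewrite mulnA.
  rewrite -count_mul_iota // e6 // => t ht Tt; apply/eqP; exact: mod3_T.
have := count_predC (fun k => T (3 * k)) (iota 1 (2 * gamma)).
by rewrite size_iota count_T3 mul2n -addnn => /addnI.
Qed.

Lemma hyperelliptic3_mul3 k : 2 * gamma <= k -> T (3 * k).
Proof.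
case: T_sg T_hyp => T0 T_add _ [T6 _ _ T3].
apply: (@mem_ge_of_consecutive (fun k => T (3 * k))) => //.
- by move=> a b; rewrite mulnDr; apply: T_add.
- by rewrite mulnA.
- by rewrite addn1 in T3.
- by rewrite /= muln0 T0 count_gaps_mul3.
Qed.

Lemma count_gaps_mod3_0 n : 6 * gamma < n ->
  count (fun x => ~~ T x && (x %% 3 == 0)) (iota 0 n) = gamma.
Proof.
move=> lt_6g_n; rewrite (@count_iota_widen _ (6 * gamma).+1) //=; last first.
  move=> k /andP[lt_6g_k _]; apply/nandP; case: (eqVneq (k %% 3) 0) => [k_mod3|]; last by right.
  by left; rewrite negbK (divn_eq k 3) k_mod3 addn0 mulnC hyperelliptic3_mul3 //; lia.
have e6 : 6 * gamma = 3 * (2 * gamma) by rewrite mulnA.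
rewrite e6 count_mul_iota //; last by move=> t _ /andP[].
case: T_sg => T0 _ _; rewrite T0 add0n -[RHS]count_gaps_mul3.
by apply: eq_count => k; rewrite /= modnMr andbT.
Qed.

End Hyperelliptic.

Lemma cardTi_compl_u1_le g gamma T u1 :
  numerical_semigroup T -> genus T g -> hyperelliptic3 T gamma -> is_u1 T u1 ->
  cardTi T g (3 - u1 %% 3) + g <=
  count (fun x => x %% 3 == 3 - u1 %% 3) (iota 1 (2 * g)) + u1 %/ 3 + 2 * gamma.
Proof.
move=> T_sg T_genus T_hyp [Tu1 u1_mod3 _]; have [_ T_add _] := T_sg.
pose gaps i :=
  count (fun x => ~~ T x && (x %% 3 == i)) (iota 0 (u1 + (6 * gamma + 2 * g).+1)).
have r_range : 0 < u1 %% 3 < 3 by rewrite lt0n u1_mod3 ltn_mod.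
have gaps_total : gaps 0 + gaps (u1 %% 3) + gaps (3 - u1 %% 3) = g.
  by rewrite /gaps -count_split_mod3 // (count_gaps_genus T_sg T_genus); lia.
have gaps0 : gaps 0 = gamma by apply: (count_gaps_mod3_0 T_sg T_hyp); lia.
have gaps_r : gaps (u1 %% 3) <= u1 %/ 3 + gamma.
  apply: (leq_trans (count_gaps_shift_le T_add 3 _ Tu1)).
  by rewrite count_mod_iota ?ltn_mod // ltnn addn0 (count_gaps_mod3_0 T_sg T_hyp); lia.
have gaps_c : cardTi T g (3 - u1 %% 3) + gaps (3 - u1 %% 3) =
              count (fun x => x %% 3 == 3 - u1 %% 3) (iota 1 (2 * g)).
  rewrite /gaps (count_iota_gaps T_sg T_genus) ?count_split_and //; last by lia.
  by move=> x /andP[].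
lia.
Qed.

Local Open Scope ring_scope.

Theorem lemma2p2 (g gamma : nat) (T : nat -> bool) (u1 : nat) :
  numerical_semigroup T -> genus T g -> hyperelliptic3 T gamma -> is_u1 T u1 ->
  ((cardTi T g (3 - u1 %% 3))%:Z <=
     gamma%:Z + ceil3 (u1%:Z - g%:Z + 3 * gamma%:Z - 1 - ((g %% 3) %/ 2)%N%:Z))%R.
Proof.
move=> T_sg T_genus T_hyp u1_min; have [_ u1_mod3 _] := u1_min.
have bound_Tc := cardTi_compl_u1_le T_sg T_genus T_hyp u1_min.
have lt_c3 : (3 - u1 %% 3 < 3)%N by lia.
have := count_mod_iota (2 * g).+1 lt_c3; rewrite /= mod0n => count_c.
by rewrite -lerBlDl; apply: le_ceil3; lia.
Qed.
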